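(* Let $e'$ be a fixed edge of $C_o:=\overline{C_{F_\mathsf{o}}}$ and let $L_{C_o},U_{C_o}$ be as defined in the context. For each integer $x\in[L_{C_o},U_{C_o}]$ there exists an edge $e^\star\in C_o$ with $\ell^{e^\star}_{C_o}(e')=x$ such that, if $e^\star$ is used as the reference edge, $e^\star$ belongs to a horizontal segment $S$ with $\mathcal{N}_\mathsf{north}(S)=\emptyset$.
   Context: Setting: $G$ is a biconnected simple plane graph of maximum degree at most $4$ with an ortho-radial representation (angles in $\{90^\circ,180^\circ,270^\circ\}$ at corners, a central face $F_\mathsf{c}$ and an outer face $F_\mathsf{o}$) satisfying (R1) angle sums at vertices are $360^\circ$ and (R2) rotation of the clockwise facial cycle $C_F$ is $4$ for regular faces, $0$ for a face that is exactly one of central/outer, $-4$ for a face that is both. Rotation of a length-2 path $(u,v,w)$ is $-1,0,1$ for left turn/straight/right turn ($\pm2$ for a $180^\circ$ turn), of a path the sum over its length-2 subpaths. A path is crossing-free if it repeats no undirected edge and does not cross itself at repeated vertices. For edges $e=(u,v)$, $f=(x,y)$ and a crossing-free reference path $P$ from $u$ or $v$ to $x$ or $y$ avoiding $e,\overline e,f,\overline f$: $\mathsf{direction}(e,P,f)$ is $\mathsf{rotation}(e\circ P\circ f)$ ($P$: $v\to x$), $\mathsf{rotation}(\overline e\circ P\circ f)+2$ ($u\to x$), $\mathsf{rotation}(e\circ P\circ\overline f)-2$ ($v\to y$), $\mathsf{rotation}(\overline e\circ P\circ\overline f)$ ($u\to y$). The interior of a cycle is the side with respect to which it is clockwise; a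 simple cycle $C$ with $F_\mathsf{o}$ in its exterior is essential if $F_\mathsf{c}$ is in its interior. For a choice of reference edge $e^\star$ on $C_o$, an essential cycle $C$ and $e\in C$, $\ell^{e^\star}_C(e)=\mathsf{direction}(e^\star,P,e)$ for any reference path $P$ in the exterior of $C$ (well defined), with $\ell^{e^\star}_{C_o}(e^\star)=0$. With reference edge $e^\star$, each edge points east/south/west/north according as $\mathsf{direction}(e^\star,P,e)\bmod4$ is $0,1,2,3$; horizontal segments are the connected components of the set of east edges, and $\mathcal{N}_\mathsf{north}(S)$ is the set of north edges $(a,b)$ with $a\in S$. For an essential cycle $C$, let $I_C=\{\ell^{e'}_C(e):e\in C\}$ (a set of consecutive integers). Define $L_C=1-\max I_C$ and $U_C=-1-\min I_C$ if $|I_C|\ge2$, and $L_C=U_C=-\min I_C$ if $|I_C|=1$. (Equivalently, with reference edge $e^\star$, $C$ has all labels $\ge0$ and some positive iff $\ell^{e^\star}_{C_o}(e')>U_C$, and all labels $\le0$ and some negative iff $\ell^{e^\star}_{C_o}(e')<L_C$.) *)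

From Stdlib Require Import Relation_Operators.
From HB Require Import structures.
From mathcomp Require Import all_boot all_order all_algebra all_fingroup.
Set Implicit Arguments. Unset Strict Implicit. Unset Printing Implicit Defensive.
Import Order.TTheory GRing.Theory Num.Theory.

(* Darts = directed edges.  [rev d] is the reverse dart, [rot d] is the next
   dart around [tail d] in counterclockwise order, [angle d] is the angle
   (in units of 90 degrees) between [d] and [rot d] at [tail d].
   A face is an orbit of [facenext]; the walk along [facenext] keeps the face
   on its right, i.e. it is the clockwise facial cycle C_F.
   [fcen] / [fout] are darts of the clockwise facial cycles of the central /
   outer face. *)
Record orgraph := ORGraph {
  vert : finType;
  dart : finType;
  tail : dart -> vert;
  rev : dart -> dart;
  rot : {perm dart};
  angle : dart -> nat;
  fcen : dart;
  fout : dart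
}.

Section Defs.
Variable G : orgraph.
Local Notation V := (vert G).
Local Notation D := (dart G).
Local Notation tl := (@tail G).
Local Notation rv := (@rev G).
Local Notation rt := (fun_of_perm (rot G)).

Definition head (d : D) : V := tl (rv d).

Definition facenext (d : D) : D := rt (rv d).

(* sum of the angles swept counterclockwise around a vertex from dart c to
   dart b (at least one step; a full turn, 360 deg, if b = c) *)
Definition angsum (c b : D) : nat :=
  (\sum_(i < (findex rt (rt c) b).+1) @angle G (iter i rt c))%N.

(* rotation of the length-2 path a, b (head a = tail b): the angle on the
   right of the path is angsum (rev a) b; rotation = 2 - (right angle) *)
Definition turn (a b : D) : int := (2%:Z - (angsum (rv a) b)%:Z)%R.

Fixpoint rotation (s : seq D) : int :=
  match s with
  | a :: ((b :: _) as s') => (turn a b + rotation s')%R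
  | _ => 0%R
  end.

Definition adj : rel V := [rel u w | [exists d, (tl d == u) && (head d == w)]].

Definition is_face_of (f d : D) : bool := fconnect facenext f d.

Definition face_rotation (f : D) : int :=
  (\sum_(x | is_face_of f x) turn x (facenext x))%R.

Definition nfaces : nat := #|[set d | froot facenext d == d]|.

Definition valid_orgraph : Prop :=
  (forall d, rv (rv d) = d) /\ (forall d, rv d != d) /\
  (forall d, tl (rt d) = tl d) /\
  (forall d d', tl d = tl d' -> fconnect rt d d') /\
  (forall d, tl d != head d) /\
  (forall d d', tl d = tl d' -> head d = head d' -> d = d') /\
  (forall v, #|[set d | tl d == v]| <= 4)%N /\
  (* biconnected: connected and without cut vertex *)
  (forall u w, connect adj u w) /\
  (forall x u w, u != x -> w != x ->
     connect [rel a b | adj a b && (b != x)] u w) /\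
  (* plane embedding: Euler's formula V - E + F = 2, with E = #|D|/2 *)
  (2 * #|V| + 2 * nfaces = #|D| + 4)%N /\
  (forall d, 1 <= @angle G d <= 3)%N /\
  (forall v, \sum_(d | tl d == v) @angle G d = 4)%N /\
  (forall f,
     face_rotation f =
       (if is_face_of (fcen G) f && is_face_of (fout G) f then (- 4)%R
        else if is_face_of (fcen G) f || is_face_of (fout G) f then 0%R
        else 4%R)).

(* a path is a start vertex v and a list of darts *)
Fixpoint walk_from (v : V) (s : seq D) : bool :=
  match s with
  | [::] => true
  | d :: s' => (tl d == v) && walk_from (head d) s'
  end.

Definition walk_end (v : V) (s : seq D) : V := last v (map head s).

Definition between (a b c : D) : bool :=
  (0 < findex rt a c < findex rt a b)%N.

Definition crossing (a1 b1 a2 b2 : D) : bool :=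
  between a1 b1 a2 != between a1 b1 b2.

Definition crossing_free (v : V) (s : seq D) : Prop :=
  walk_from v s /\
  (* no undirected edge repeated *)
  uniq (s ++ map rv s) /\
  (* no self-crossing at repeated (internal) vertices *)
  (forall i j, (i < j)%N -> (j.+1 < size s)%N ->
     head (nth (fout G) s i) = head (nth (fout G) s j) ->
     ~~ crossing (rv (nth (fout G) s i)) (nth (fout G) s i.+1)
                 (rv (nth (fout G) s j)) (nth (fout G) s j.+1)).

Definition refpath (e : D) (v : V) (P : seq D) (f : D) : Prop :=
  crossing_free v P /\
  (v = tl e \/ v = head e) /\
  (walk_end v P = tl f \/ walk_end v P = head f) /\
  all (fun d => d \notin [:: e; rv e; f; rv f]) P.

Definition direction (e : D) (v : V) (P : seq D) (f : D) : int :=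
  let t := walk_end v P in
  let a := if v == head e then e else rv e in
  let b := if t == tl f then f else rv f in
  (rotation (a :: P ++ [:: b])
   + (if v == head e then 0 else 2)%:Z
   - (if t == tl f then 0 else 2)%:Z)%R.

(* with reference edge estar, e points east/south/west/north for k=0/1/2/3 *)
Definition points (estar e : D) (k : nat) : Prop :=
  exists v P, refpath estar v P e /\ ((direction estar v P e) %% 4)%Z = (k%:Z)%R.

(* vertices of the horizontal segment containing estar (connected component
   of the set of east edges containing estar) *)
Definition east_step (estar : D) (a b : V) : Prop :=
  exists d, points estar d 0 /\
    ((tl d = a /\ head d = b) \/ (tl d = b /\ head d = a)).

Definition seg_vertex (estar : D) (v : V) : Prop :=
  clos_refl_trans V (east_step estar) (tl estar) v.

(* C_o is the reversal of C_{F_o}; successor of a dart on C_o *)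
Definition cosucc (d : D) : D := (rot G)^-1%g (rv d).

Definition onCo (d : D) : bool := fconnect cosucc (rv (fout G)) d.

(* ell^{estar}_{C_o}(e) = direction(estar, P, e) with P the arc of C_o from
   head estar to tail e (a crossing-free reference path in the exterior of
   C_o), i.e. rotation(estar o P o e); it is 0 for e = estar. *)
Definition lab (estar e : D) : int :=
  (\sum_(i < findex cosucc estar e) turn (iter i cosucc estar) (iter i.+1 cosucc estar))%R.

Definition Imax (e' : D) : int :=
  (\big[Num.max/lab e' e']_(e <- fingraph.orbit cosucc e') lab e' e)%R.
Definition Imin (e' : D) : int :=
  (\big[Num.min/lab e' e']_(e <- fingraph.orbit cosucc e') lab e' e)%R.

Definition LCo (e' : D) : int :=
  if Imax e' != Imin e' then (1 - Imax e')%R else (- Imin e')%R.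
Definition UCo (e' : D) : int :=
  if Imax e' != Imin e' then (-1 - Imin e')%R else (- Imin e')%R.

End Defs.

From Pilot Require Import Defs.
From HB Require Import structures.
From mathcomp Require Import all_boot all_order all_algebra all_fingroup.
From mathcomp Require Import zify ring.
From Stdlib Require Import Relation_Operators Operators_Properties.
Set Implicit Arguments. Unset Strict Implicit. Unset Printing Implicit Defensive.
Import Order.TTheory GRing.Theory Num.Theory.
Local Open Scope ring_scope.

(* The direction of an edge [f] seen from [e] does not depend on the
   reference path.  Indeed, by Euler's formula the map lies on a sphere, whose
   first cohomology vanishes: every Z/4-valued 1-cocycle on the darts is a
   coboundary (a rank count over F_2, then a lifting to Z/4).  Applied to the
   turning angles this gives a potential [phi] on darts with
   [turn a b = phi b - phi a] and [phi (rev d) = phi d + 2] modulo 4, and the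
   direction of [f] from [e] is [phi f - phi e] modulo 4.
   Consecutive labels on C_o differ by the outer angle minus 2, i.e. by -1, 0
   or 1.  If they are all equal, take [e* = e'].  Otherwise a discrete
   intermediate value argument yields a maximal run of darts of C_o with label
   [-x] relative to [e'], entered and left by right turns; take its first dart
   as [e*].  At each vertex of the run the outer angle is 180 or 270 degrees,
   so all edges there point east, south or west, and the east and west ones
   stay in the run: the horizontal segment of [e*] lies in the run and has no
   north edge. *)

Lemma pchar2_F2 : (2 \in [pchar 'F_2])%N. Proof. exact: pchar_Fp. Qed.

Lemma addrrF2 (x : 'F_2) : x + x = 0. Proof. exact: (addrr_pchar2 pchar2_F2). Qed.

Lemma opprF2 (x : 'F_2) : - x = x. Proof. exact: (oppr_pchar2 pchar2_F2). Qed.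

Lemma addF2I (x y : 'F_2) : x + y = 0 -> x = y.
Proof. by move=> xy; apply/eqP; rewrite -subr_eq0 opprF2 xy. Qed.

Lemma intrF2_eq0 (z : int) : (z%:~R == 0 :> 'F_2) = (2 %| z)%Z.
Proof. by rewrite (dvdz_pcharf pchar2_F2). Qed.

Lemma sum_enum_val (T : finType) (R : nmodType) (g : T -> R) :
  \sum_(i < #|T|) g (enum_val i) = \sum_d g d.
Proof. by rewrite -(big_enum_val (A := T)); apply: eq_bigl => x; rewrite inE. Qed.

Lemma sum_enum_val_eq (T : finType) (R : pzSemiRingType) (g : T -> R) x :
  \sum_(i < #|T|) g (enum_val i) * (enum_val i == x)%:R = g x.
Proof.
rewrite (sum_enum_val (fun d => g d * (d == x)%:R)) (bigD1 x) //= eqxx mulr1.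
by rewrite big1 ?addr0 // => d /negbTE ->; rewrite mulr0.
Qed.

Lemma sum_row_enum_val_eq (T : finType) (R : pzSemiRingType) m
    (w : 'M[R]_(m, #|T|)) k x :
  \sum_(v < #|T|) w k v * (enum_val v == x)%:R = w k (enum_rank x).
Proof.
rewrite (bigD1 (enum_rank x)) //= enum_rankK eqxx mulr1 big1 ?addr0 // => v hv.
by case: eqP => [hx|]; [move: hv; rewrite -hx enum_valK eqxx | rewrite mulr0].
Qed.

Lemma dvdz4_mul2 (x : int) : (4 %| x * 2)%Z = (2 %| x)%Z.
Proof. by rewrite (_ : 4 = 2 * 2) // dvdz_mul2r. Qed.

Lemma dvdz4_dvdz2 (x : int) : (4 %| x)%Z -> (2 %| x)%Z.
Proof. by apply: dvdz_trans; rewrite (_ : 4 = 2 * 2) // dvdz_mulr. Qed.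

Lemma sum_orbit (T : finType) (R : nmodType) (f : T -> T) (F : T -> R) x :
  \sum_(i < fingraph.order f x) F (iter i f x) = \sum_(y | fconnect f x y) F y.
Proof.
have -> : \sum_(y | fconnect f x y) F y = \sum_(y <- fingraph.orbit f x) F y.
  rewrite big_uniq ?fingraph.orbit_uniq //.
  by apply: eq_bigl => y; rewrite -fconnect_orbit.
rewrite (big_nth x) size_traject big_mkord.
by apply: eq_bigr => i _; rewrite nth_traject.
Qed.

Lemma order_fconnect (T : finType) (f : T -> T) x y : injective f ->
  fconnect f x y -> fingraph.order f y = fingraph.order f x.
Proof.
move=> f_inj xy; apply/esym/eq_card => z.
exact: (same_connect (fconnect_sym f_inj) xy z).
Qed.

Lemma bigmax_attained disp (R : orderType disp) (I : eqType) (s : seq I)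
    (F : I -> R) i0 :
  i0 \in s -> exists2 i, i \in s & \big[Order.max/F i0]_(i <- s) F i = F i.
Proof.
move=> s_i0; rewrite big_seq.
elim/big_ind: _ => [|x y [i si ->] [j sj ->]|i si]; [by exists i0 | | by exists i].
by rewrite maxEle; case: ifP => _; [exists j | exists i].
Qed.

Lemma bigmin_attained disp (R : orderType disp) (I : eqType) (s : seq I)
    (F : I -> R) i0 :
  i0 \in s -> exists2 i, i \in s & \big[Order.min/F i0]_(i <- s) F i = F i.
Proof.
move=> s_i0; rewrite big_seq.
elim/big_ind: _ => [|x y [i si ->] [j sj ->]|i si]; [by exists i0 | | by exists i].
by rewrite minEle; case: ifP => _; [exists i | exists j].
Qed.

(* Take the first [j > a] with [f j >= y + 1], then the last [i < j] with
   [f i <= y - 1]; unit steps force the values strictly between to be [y]. *)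
Lemma unit_steps_crossing (f : nat -> int) a b y : (a < b)%N ->
  (forall k, -1 <= f k.+1 - f k <= 1) -> f a <= y - 1 -> y + 1 <= f b ->
  exists i j, [/\ (i.+1 < j)%N, f i = y - 1, f j = y + 1 &
                  forall t, (i < t < j)%N -> f t = y].
Proof.
move=> ab f_step fa fb.
have exP : exists j, (a < j <= b)%N && (y + 1 <= f j) by exists b; rewrite ab leqnn fb.
case: (ex_minnP exP) => j /andP [/andP [aj jb] fj] min_j.
have exQ : exists i, (a <= i < j)%N && (f i <= y - 1) by exists a; rewrite leqnn aj fa.
have ubQ i : (a <= i < j)%N && (f i <= y - 1) -> (i <= j)%N.
  by case/andP => /andP [_ /ltnW].
case: (ex_maxnP exQ ubQ) => i /andP [/andP [ai ij] fi] max_i.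
have mid t : (i < t < j)%N -> f t = y.
  case/andP=> it tj.
  have : ~~ (f t <= y - 1).
    by apply/negP => ft; have := max_i t; rewrite ft andbT; lia.
  have : ~~ (y + 1 <= f t).
    by apply/negP => ft; have := min_j t; rewrite ft andbT; lia.
  by rewrite -!real_ltNge ?num_real //; lia.
have := f_step i; have := f_step j.-1; rewrite prednK; last by lia.
have [->|ij2] := eqVneq i.+1 j; first by lia.
have fi1 : f i.+1 = y by apply: mid; lia.
have fj1 : f j.-1 = y by apply: mid; lia.
by exists i, j; split => //; lia.
Qed.

(** * Cocycles on a plane map *)

Section PlaneCocycle.
Variables (D V : finType) (tl hd : D -> V) (rv fr : D -> D).
Hypothesis rvK : involutive rv.
Hypothesis rv_neq : forall d, rv d != d.
Hypothesis hdE : forall d, hd d = tl (rv d).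
Hypothesis vertex_connected :
  forall h : V -> 'F_2, (forall d, h (tl d) = h (hd d)) -> forall u w, h u = h w.
Hypothesis dual_connected : forall c : D -> 'F_2, (forall d, c (rv d) = c d) ->
  (forall d d', fr d = fr d' -> c d = c d') -> forall d d', c d = c d'.
Hypothesis face_telescope : forall (R : zmodType) (h : V -> R) f,
  \sum_(x | fr x == f) (h (hd x) - h (tl x)) = 0.
Hypothesis euler : (2 * #|V| + 2 * #|[set d | fr d == d]| = #|D| + 4)%N.

Local Notation n := #|D|.
Local Notation ev j := (enum_val (j : 'I_#|D|)).

Definition drow (c : D -> 'F_2) : 'rV_n := \row_j c (ev j).
Definition dfun (r : 'rV['F_2]_n) (d : D) : 'F_2 := r 0 (enum_rank d).

Lemma dfunE (r : 'rV['F_2]_n) j : r 0 j = dfun r (ev j).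
Proof. by rewrite /dfun enum_valK. Qed.

Lemma dfunK (r : 'rV['F_2]_n) : drow (dfun r) = r.
Proof. by apply/rowP => j; rewrite mxE dfunE. Qed.

Lemma drowK c d : dfun (drow c) d = c d.
Proof. by rewrite /dfun mxE enum_rankK. Qed.

Lemma eq_rv x y : (x == rv y) = (y == rv x).
Proof. by apply/eqP/eqP => ->; rewrite rvK. Qed.

(* The rows of [sym_mx] span the functions with [c (rv d) = c d], those of
   [face_mx] the functions constant on faces, and those of [inc_mx] the
   coboundaries [d |-> h (tl d) + h (hd d)]. *)
Definition sym_mx : 'M['F_2]_n :=
  \matrix_(i, j) ((ev j == ev i)%:R + (ev j == rv (ev i))%:R).
Definition face_mx : 'M['F_2]_n := \matrix_(i, j) (fr (ev j) == fr (ev i))%:R.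
Definition inc_mx : 'M['F_2]_(#|V|, n) :=
  \matrix_(v, j) ((tl (ev j) == enum_val v)%:R + (hd (ev j) == enum_val v)%:R).

Lemma trmx_sym_mx : sym_mx^T = sym_mx.
Proof. by apply/matrixP => i j; rewrite !mxE eq_sym eq_rv. Qed.

Lemma trmx_face_mx : face_mx^T = face_mx.
Proof. by apply/matrixP => i j; rewrite !mxE eq_sym. Qed.

Lemma mul_sym_mx (u : 'rV_n) d :
  (u *m sym_mx) 0 (enum_rank d) = dfun u d + dfun u (rv d).
Proof.
rewrite mxE (eq_bigr (fun i => dfun u (ev i) * (ev i == d)%:R +
                               dfun u (ev i) * (ev i == rv d)%:R)).
  by rewrite big_split /= !sum_enum_val_eq.
by move=> i _; rewrite !mxE enum_rankK mulrDr eq_sym eq_rv dfunE.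
Qed.

Lemma mul_face_mx (u : 'rV_n) d :
  (u *m face_mx) 0 (enum_rank d) = \sum_(x | fr x == fr d) dfun u x.
Proof.
pose g x := if fr x == fr d then dfun u x else 0.
rewrite mxE (eq_bigr (fun i => g (ev i))); last first.
  move=> i _; rewrite !mxE dfunE enum_rankK eq_sym /g.
  by case: eqP; rewrite ?mulr1 ?mulr0.
by rewrite sum_enum_val [RHS]big_mkcond.
Qed.

Lemma mul_inc_mx (u : 'rV_#|V|) d :
  (u *m inc_mx) 0 (enum_rank d) = u 0 (enum_rank (tl d)) + u 0 (enum_rank (hd d)).
Proof.
rewrite mxE (eq_bigr (fun v => u 0 v * (enum_val v == tl d)%:R +
                               u 0 v * (enum_val v == hd d)%:R)).
  by rewrite big_split /= !sum_row_enum_val_eq.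
by move=> v _; rewrite !mxE enum_rankK mulrDr ![(_ == enum_val v)]eq_sym.
Qed.

Lemma sym_mx_tr_ker c :
  drow c *m sym_mx^T = 0 -> forall d, c (rv d) = c d.
Proof.
move=> c0 d; have := congr1 (fun r : 'rV_n => r 0 (enum_rank d)) c0.
by rewrite trmx_sym_mx mul_sym_mx !drowK mxE => /addF2I/esym.
Qed.

(* A symmetric function is the symmetrization of its restriction to one dart
   of each pair [{d, rv d}]. *)
Lemma sym_mx_tr_kerS : (kermx sym_mx^T <= sym_mx)%MS.
Proof.
apply/row_subP => k; set r := row k _.
have /sym_mx_tr_ker c_sym : drow (dfun r) *m sym_mx^T = 0.
  by rewrite dfunK -row_mul mulmx_ker row0.
pose half d := if (enum_rank d < enum_rank (rv d))%N then dfun r d else 0.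
apply/submxP; exists (drow half); apply/rowP => j.
rewrite -[j]enum_valK; move: (enum_val j) => x.
rewrite mul_sym_mx !drowK /half rvK -/(dfun r x).
have : (enum_rank x : nat) != enum_rank (rv x).
  by apply: contra (rv_neq x) => /eqP/ord_inj/enum_rank_inj <-.
by case: ltngtP => //= _ _; rewrite ?addr0 ?add0r ?c_sym.
Qed.

Lemma rank_sym_mx : (n <= 2 * \rank sym_mx)%N.
Proof.
have := mxrankS sym_mx_tr_kerS; rewrite mxrank_ker mxrank_tr; lia.
Qed.

Local Notation faces := [set d | fr d == d].

Definition face_ind_mx : 'M['F_2]_(#|faces|, n) :=
  \matrix_(i, j) (fr (ev j) == enum_val i)%:R.

Lemma fr_face_root i : fr (enum_val (i : 'I_#|faces|)) = enum_val i.
Proof. by have := enum_valP i; rewrite inE => /eqP. Qed.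

Lemma face_ind_mx_sub : (face_ind_mx <= face_mx)%MS.
Proof.
apply/row_subP => i; have -> : row i face_ind_mx = row (enum_rank (enum_val i)) face_mx.
  by apply/rowP => j; rewrite !mxE enum_rankK fr_face_root.
exact: row_sub.
Qed.

Lemma face_ind_mx_free : row_free face_ind_mx.
Proof.
rewrite -kermx_eq0; apply/eqP/row_matrixP => k; rewrite row0.
have : row k (kermx face_ind_mx) *m face_ind_mx = 0.
  by rewrite -row_mul mulmx_ker row0.
move: (row k _) => x x0; apply/rowP => i; rewrite mxE.
have := congr1 (fun r : 'rV_n => r 0 (enum_rank (enum_val i))) x0.
rewrite !mxE (eq_bigr (fun l => x 0 l * (l == i)%:R)); last first.
  move=> l _; rewrite !mxE enum_rankK fr_face_root.
  by rewrite (inj_eq (@enum_val_inj _ _)) eq_sym.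
rewrite (bigD1 i) //= eqxx mulr1 big1 ?addr0 // => l /negbTE ->.
by rewrite mulr0.
Qed.

Lemma rank_face_mx : (#|faces| <= \rank face_mx)%N.
Proof. by have := mxrankS face_ind_mx_sub; rewrite (eqP face_ind_mx_free). Qed.

Lemma row_sub_const (T : finType) (r : 'rV['F_2]_#|T|) :
  (forall i j, r 0 i = r 0 j) -> (r <= (const_mx 1 : 'rV_#|T|))%MS.
Proof.
move=> r_const; apply/sub_rVP.
case: (pickP (fun _ : 'I_#|T| => true)) => [i0 _ | none].
  by exists (r 0 i0); apply/rowP => j; rewrite !mxE mulr1 (r_const j i0).
by exists 0; apply/rowP => j; have := none j.
Qed.

Lemma capmx_sym_face : ((sym_mx :&: face_mx)%MS <= (const_mx 1 : 'rV_n))%MS.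
Proof.
apply/row_subP => i; set x := row i _.
have [/submxP [u xS] /submxP [v xF]] : (x <= sym_mx)%MS /\ (x <= face_mx)%MS.
  by split; apply: submx_trans (row_sub i _) _; [exact: capmxSl | exact: capmxSr].
apply: row_sub_const => j k; rewrite !dfunE; apply: dual_connected => [d|d d' fdd'].
  by rewrite /dfun xS !mul_sym_mx rvK addrC.
by rewrite /dfun xF !mul_face_mx fdd'.
Qed.

Definition sym_face_mx := col_mx sym_mx face_mx.

Lemma cocycle_ker c : (forall d, c (rv d) = c d) ->
  (forall f, \sum_(x | fr x == f) c x = 0) -> drow c *m sym_face_mx^T = 0.
Proof.
move=> c_sym c_face; rewrite tr_col_mx mul_mx_row.
have -> : drow c *m sym_mx^T = 0.
  apply/rowP => i; rewrite -[i]enum_valK trmx_sym_mx mul_sym_mx !drowK mxE.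
  by rewrite c_sym addrrF2.
have -> : drow c *m face_mx^T = 0.
  apply/rowP => i; rewrite -[i]enum_valK trmx_face_mx mul_face_mx mxE.
  rewrite -[RHS](c_face (fr (ev i))).
  by apply: eq_bigr => x _; rewrite drowK.
exact: row_mx0.
Qed.

Lemma inc_mx_sub : (inc_mx <= kermx sym_face_mx^T)%MS.
Proof.
apply/sub_kermxP/row_matrixP => v; rewrite row_mul row0.
pose dv d := (tl d == enum_val v)%:R + (hd d == enum_val v)%:R : 'F_2.
have -> : row v inc_mx = drow dv by apply/rowP => j; rewrite !mxE.
apply: cocycle_ker => [d|f]; first by rewrite /dv !hdE rvK addrC.
rewrite -[RHS](face_telescope (fun w => (w == enum_val v)%:R : 'F_2) f).
by apply: eq_bigr => x _; rewrite opprF2 addrC.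
Qed.

Lemma inc_mx_ker : (kermx inc_mx <= (const_mx 1 : 'rV_#|V|))%MS.
Proof.
apply/row_subP => k.
have : row k (kermx inc_mx) *m inc_mx = 0 by rewrite -row_mul mulmx_ker row0.
move: (row k _) => h h0; apply: row_sub_const => i j.
rewrite -[i]enum_valK -[j]enum_valK.
apply: (@vertex_connected (fun w => h 0 (enum_rank w))) => d.
have := congr1 (fun r : 'rV_n => r 0 (enum_rank d)) h0.
by rewrite mul_inc_mx mxE => /addF2I.
Qed.

(* [kermx sym_face_mx^T] is the space of cocycles; the rank bounds above and
   Euler's formula show that the coboundaries [inc_mx] fill it. *)
Theorem F2_cocycle_coboundary (c : D -> 'F_2) : (forall d, c (rv d) = c d) ->
  (forall f, \sum_(x | fr x == f) c x = 0) ->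
  exists h : V -> 'F_2, forall d, c d = h (tl d) + h (hd d).
Proof.
move=> c_sym c_face.
have rank_bound : (\rank sym_face_mx + \rank (sym_mx :&: face_mx)%MS
                   = \rank sym_mx + \rank face_mx)%N.
  by rewrite -(mxrank_sum_cap sym_mx face_mx) (addsmxE sym_mx face_mx).1.
have rank_cap : (\rank (sym_mx :&: face_mx)%MS <= 1)%N.
  exact: leq_trans (mxrankS capmx_sym_face) (rank_leq_row _).
have rank_inc : (#|V| <= \rank inc_mx + 1)%N.
  by have := leq_trans (mxrankS inc_mx_ker) (rank_leq_row _); rewrite mxrank_ker; lia.
have rank_sym := rank_sym_mx; have rank_face := rank_face_mx.
have ker_inc : (kermx sym_face_mx^T <= inc_mx)%MS.
  have [_ <-] := mxrank_leqif_sup inc_mx_sub.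
  rewrite eqn_leq mxrankS ?inc_mx_sub //= mxrank_ker mxrank_tr.
  (* restated so that [lia] sees the ranks as plain [nat]s *)
  suff : (#|D| - \rank sym_face_mx <= \rank inc_mx)%N by [].
  lia.
have /submxP [u cu] : (drow c <= inc_mx)%MS.
  by apply: submx_trans ker_inc; apply/sub_kermxP; exact: cocycle_ker.
exists (fun w => u 0 (enum_rank w)) => d.
have := congr1 (fun r : 'rV_n => r 0 (enum_rank d)) cu.
by rewrite mul_inc_mx mxE enum_rankK.
Qed.

Lemma mod2_cocycle_coboundary (w : D -> int) :
  (forall d, (2 %| w (rv d) + w d)%Z) ->
  (forall f, (2 %| \sum_(x | fr x == f) w x)%Z) ->
  exists h : V -> int, forall d, (2 %| h (hd d) - h (tl d) - w d)%Z.
Proof.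
move=> w_sym w_face; pose c d : 'F_2 := (w d)%:~R.
have [d|f|h hc] := @F2_cocycle_coboundary c.
- by apply/addF2I/eqP; rewrite -intrD intrF2_eq0.
- by apply/eqP; rewrite -rmorph_sum intrF2_eq0.
exists (fun v => Posz (h v : nat)) => d.
rewrite -intrF2_eq0 !intrB -!pmulrn !natr_Zp -/(c d) hc !opprF2.
by rewrite [h (tl d) + _]addrC addrrF2.
Qed.

(* Two rounds of the mod 2 statement: the first corrects [w] to an even
   cocycle [2 * w2], the second applies to [w2]. *)
Lemma mod4_cocycle_coboundary (w : D -> int) :
  (forall d, (4 %| w (rv d) + w d)%Z) ->
  (forall f, (4 %| \sum_(x | fr x == f) w x)%Z) ->
  exists g : V -> int, forall d, (4 %| g (hd d) - g (tl d) - w d)%Z.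
Proof.
move=> w_sym w_face.
have [h hw] := mod2_cocycle_coboundary (fun d => dvdz4_dvdz2 (w_sym d))
                                        (fun f => dvdz4_dvdz2 (w_face f)).
pose w2 d := ((w d - (h (hd d) - h (tl d))) %/ 2)%Z.
have w2E d : w d - (h (hd d) - h (tl d)) = w2 d * 2.
  by rewrite divzK // -opprB rpredN.
have [|f|h2 hw2] := @mod2_cocycle_coboundary w2.
- move=> d; rewrite -dvdz4_mul2 mulrDl -!w2E !hdE rvK -hdE.
  have -> : w (rv d) - (h (tl d) - h (hd d)) + (w d - (h (hd d) - h (tl d)))
            = w (rv d) + w d by ring.
  exact: w_sym.
- rewrite -dvdz4_mul2 mulr_suml.
  under eq_bigr do rewrite -w2E.
  by rewrite sumrB face_telescope subr0.
exists (fun v => h v + h2 v * 2) => d.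
have -> : h (hd d) + h2 (hd d) * 2 - (h (tl d) + h2 (tl d) * 2) - w d =
          (h2 (hd d) - h2 (tl d) - w2 d) * 2.
  by rewrite !mulrBl -w2E; ring.
by rewrite dvdz4_mul2.
Qed.

End PlaneCocycle.

(** * The direction potential *)

Section OrthoRadial.
Variable G : orgraph.
Hypothesis HG : valid_orgraph G.
Local Notation D := (dart G).
Local Notation V := (vert G).
Local Notation tl := (@tail G).
Local Notation hd := (@Defs.head G).
Local Notation rv := (@Defs.rev G).
Local Notation rt := (fun_of_perm (Defs.rot G)).
Local Notation fn := (@facenext G).
Local Notation fr := (froot fn).
Local Notation ang := (@angle G).

Lemma rvK : involutive rv. Proof. have [H _] := HG; exact: H. Qed.
Lemma rv_neq d : rv d != d. Proof. have [_ [H _]] := HG; exact: H. Qed.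
Lemma tl_rot d : tl (rt d) = tl d. Proof. have [_ [_ [H _]]] := HG; exact: H. Qed.
Lemma rot_connect d d' : tl d = tl d' -> fconnect rt d d'.
Proof. have [_ [_ [_ [H _]]]] := HG; exact: H. Qed.
Lemma adj_connect u w : connect (@adj G) u w.
Proof. have [_ [_ [_ [_ [_ [_ [_ [H _]]]]]]]] := HG; exact: H. Qed.
Lemma euler : (2 * #|V| + 2 * nfaces G = #|D| + 4)%N.
Proof. have [_ [_ [_ [_ [_ [_ [_ [_ [_ [H _]]]]]]]]]] := HG; exact: H. Qed.
Lemma angle_range d : (1 <= ang d <= 3)%N.
Proof. have [_ [_ [_ [_ [_ [_ [_ [_ [_ [_ [H _]]]]]]]]]]] := HG; exact: H. Qed.
Lemma angle_sum_vertex v : (\sum_(d | tl d == v) ang d = 4)%N.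
Proof. have [_ [_ [_ [_ [_ [_ [_ [_ [_ [_ [_ [H _]]]]]]]]]]]] := HG; exact: H. Qed.
Lemma face_rotationE f : face_rotation f =
  if is_face_of (fcen G) f && is_face_of (fout G) f then -4
  else if is_face_of (fcen G) f || is_face_of (fout G) f then 0 else 4.
Proof. have [_ [_ [_ [_ [_ [_ [_ [_ [_ [_ [_ [_ H]]]]]]]]]]]] := HG; exact: H. Qed.
Lemma hd_rv d : hd (rv d) = tl d. Proof. by rewrite /Defs.head rvK. Qed.
Lemma rv_inj : injective rv. Proof. exact: can_inj rvK. Qed.
Lemma fn_inj : injective fn.
Proof. by move=> x y /perm_inj /rv_inj. Qed.
Lemma tl_fn d : tl (fn d) = hd d. Proof. exact: tl_rot. Qed.

Lemma fconnect_rot c d : fconnect rt c d = (tl d == tl c).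
Proof.
apply/idP/eqP => [cd|/esym]; last exact: rot_connect.
by apply/esym/(fconnect_invariant _ cd) => x; apply/eqP/tl_rot.
Qed.

Lemma fr_fn d : fr (fn d) = fr d.
Proof.
apply/eqP; rewrite eq_sym (root_connect (fconnect_sym fn_inj)).
exact: fconnect1.
Qed.

Lemma face_sum_telescope (R : zmodType) (k : D -> R) f :
  \sum_(x | fr x == f) (k (fn x) - k x) = 0.
Proof.
rewrite sumrB [X in _ - X](reindex_inj fn_inj) /=; apply/eqP; rewrite subr_eq0.
by apply/eqP/eq_bigl => x; rewrite fr_fn.
Qed.

Lemma vertex_connected (T : eqType) (h : V -> T) :
  (forall d, h (tl d) = h (hd d)) -> forall u w, h u = h w.
Proof.
move=> h_edge u w.
have h_closed : closed (@adj G) [pred x | h x == h u].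
  by move=> x y /existsP [d /andP [/eqP <- /eqP <-]]; rewrite !inE h_edge.
by have := closed_connect h_closed (adj_connect u w); rewrite !inE eqxx => /esym/eqP.
Qed.

(* Since [rt e = fn (rv e)], such a function is constant around each vertex. *)
Lemma dual_connected (T : eqType) (c : D -> T) : (forall d, c (rv d) = c d) ->
  (forall d d', fr d = fr d' -> c d = c d') -> forall d d', c d = c d'.
Proof.
move=> c_rv c_face d d'.
have c_rot e e' : fconnect rt e e' -> c e = c e'.
  apply: fconnect_invariant => y; apply/eqP.
  by rewrite -[y in rt y]rvK (c_face _ (rv y) (fr_fn _)) c_rv.
pose h v := if [pick e | tl e == v] is Some e then c e else c d.
have hE e : h (tl e) = c e.
  rewrite /h; case: pickP => [e1 /eqP e1e|/(_ e)]; last by rewrite eqxx.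
  exact/c_rot/rot_connect.
rewrite -hE -(hE d'); apply: vertex_connected => e.
by rewrite hE /Defs.head hE c_rv.
Qed.

Definition sweep (c : D) (j : nat) : nat := (\sum_(i < j) ang (iter i rt c))%N.
Local Notation order c := (fingraph.order rt c).

Lemma sweep_add c j k : sweep c (j + k) = (sweep c j + sweep (iter j rt c) k)%N.
Proof.
rewrite /sweep big_split_ord /=; congr (_ + _)%N.
by apply: eq_bigr => i _; rewrite /= addnC iterD.
Qed.

Lemma sweep1 c : sweep c 1 = ang c. Proof. by rewrite /sweep big_ord1. Qed.

Lemma sweep_order c : sweep c (order c) = 4%N.
Proof.
rewrite /sweep sum_orbit -(angle_sum_vertex (tl c)).
by apply: eq_bigl => d; rewrite fconnect_rot.
Qed.

Lemma sweep_ge c j : (j <= sweep c j)%N.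
Proof.
rewrite /sweep -[X in (X <= _)%N](card_ord j) -sum1_card.
by apply: leq_sum => i _; case/andP: (angle_range (iter i rt c)).
Qed.

Lemma order_rot_ge2 c : (2 <= order c)%N.
Proof.
have := sweep_order c; have := fingraph.order_gt0 rt c.
case: (order c) => [|[|k]] //= _; rewrite sweep1 => a4.
by have := angle_range c; rewrite a4.
Qed.

Lemma sweep_periodic c q r :
  sweep c (q * order c + r) = (4 * q + sweep c r)%N.
Proof.
elim: q => [|q IH]; first by rewrite mul0n add0n muln0.
rewrite mulSn -addnA sweep_add sweep_order (iter_order perm_inj) IH; lia.
Qed.

Lemma sweep_mod4 c j :
  (sweep c j %% 4 = sweep c (findex rt c (iter j rt c)) %% 4)%N.
Proof.
have iter_periodic q r : iter (q * order c + r) rt c = iter r rt c.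
  elim: q => [|q IH]; first by rewrite mul0n add0n.
  by rewrite mulSn -addnA addnC iterD (iter_order perm_inj) IH.
rewrite {1 2}(divn_eq j (order c)) sweep_periodic iter_periodic.
by rewrite findex_iter ?ltn_pmod ?fingraph.order_gt0 // mulnC modnMDl.
Qed.

Lemma angsumE c b : angsum c b = sweep c (findex rt (rt c) b).+1.
Proof. by []. Qed.

(* Directions measured locally at each vertex, from an arbitrary dart [base d];
   the cocycle theorem glues these local choices into a global one. *)
Definition base d := odflt d [pick e | tl e == tl d].
Definition theta d : int := (sweep (base d) (findex rt (base d) d))%:Z.

Lemma base_tl d : tl (base d) = tl d.
Proof. by rewrite /base; case: pickP => [e /eqP|]. Qed.

Lemma base_eq d d' : tl d = tl d' -> base d = base d'.
Proof.
by move=> dd'; rewrite /base dd'; case: pickP => // /(_ d'); rewrite eqxx.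
Qed.

Lemma tl_iter_rot j z : tl (iter j rt z) = tl z.
Proof. by elim: j => //= j IH; rewrite tl_rot. Qed.

Lemma theta_iter z j :
  (4 %| theta z + (sweep z j)%:Z - theta (iter j rt z))%Z.
Proof.
rewrite -eqz_mod_dvd /theta (base_eq (tl_iter_rot j z)) -PoszD !modz_nat.
apply/eqP; congr Posz; set b := base z.
have bz : fconnect rt b z by rewrite fconnect_rot base_tl.
by rewrite -{2}(iter_findex bz) -sweep_add sweep_mod4 addnC iterD (iter_findex bz).
Qed.

Lemma turn_theta a b : hd a = tl b ->
  (4 %| turn a b - (2 + theta (rv a) - theta b))%Z.
Proof.
move=> ab; rewrite /turn angsumE; set k := findex rt (rt (rv a)) b.
have <- : iter k.+1 rt (rv a) = b.
  by rewrite iterSr iter_findex // fconnect_rot tl_rot -ab.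
have -> : forall x y z : int, 2 - x - (2 + y - z) = - (y + x - z) by move=> *; ring.
by rewrite rpredN theta_iter.
Qed.

Definition turn_weight d : int := 2 + theta (rv d) - theta d.

Lemma turn_weight_rv d : (4 %| turn_weight (rv d) + turn_weight d)%Z.
Proof.
rewrite /turn_weight rvK.
by have -> : 2 + theta d - theta (rv d) + (2 + theta (rv d) - theta d) = 4 by ring.
Qed.

Lemma turn_weight_face f : (4 %| \sum_(x | fr x == f) turn_weight x)%Z.
Proof.
have [x0 /eqP <- | no_dart] := pickP (fun x => fr x == f); last first.
  by rewrite big_pred0.
have face_turns : (4 %| \sum_(x | fr x == fr x0) turn x (fn x))%Z.
  have -> : \sum_(x | fr x == fr x0) turn x (fn x) = face_rotation x0.
    by apply: eq_bigl => x; rewrite eq_sym (root_connect (fconnect_sym fn_inj)).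
  by rewrite face_rotationE; case: ifP => _ //; case: ifP.
have -> : \sum_(x | fr x == fr x0) turn_weight x =
          \sum_(x | fr x == fr x0) turn x (fn x)
          - \sum_(x | fr x == fr x0) (turn x (fn x) - (2 + theta (rv x) - theta (fn x)))
          + \sum_(x | fr x == fr x0) (theta (fn x) - theta x).
  by rewrite -sumrB -big_split; apply: eq_bigr => x _; rewrite /= /turn_weight; ring.
rewrite face_sum_telescope addr0 rpredB // rpred_sum // => x _.
exact/turn_theta/esym/tl_fn.
Qed.

(* The direction of [f] seen from [e] will be [phi f - phi e] modulo 4,
   whatever the reference path ([direction_phi]). *)
Definition direction_potential (phi : D -> int) :=
  (forall a b, hd a = tl b -> (4 %| turn a b - (phi b - phi a))%Z) /\
  (forall d, (4 %| phi (rv d) - phi d - 2)%Z).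

Theorem direction_potential_exists : exists phi, direction_potential phi.
Proof.
have face_tel (R : zmodType) (h : V -> R) f :
    \sum_(x | fr x == f) (h (hd x) - h (tl x)) = 0.
  rewrite -[RHS](face_sum_telescope (h \o tl) f).
  by apply: eq_bigr => x _; rewrite /= tl_fn.
have [g gw] := mod4_cocycle_coboundary rvK rv_neq (fun d => erefl)
  (@vertex_connected _) (@dual_connected _) face_tel euler
  turn_weight_rv turn_weight_face.
exists (fun d => g (tl d) - theta d); split=> [a b ab|d].
  have -> : turn a b - (g (tl b) - theta b - (g (tl a) - theta a)) =
      turn a b - (2 + theta (rv a) - theta b) - (g (hd a) - g (tl a) - turn_weight a).
    by rewrite /turn_weight ab; ring.
  by rewrite rpredB ?gw ?turn_theta.
have -> : g (hd d) - theta (rv d) - (g (tl d) - theta d) - 2 =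
          g (hd d) - g (tl d) - turn_weight d.
  by rewrite /turn_weight; ring.
exact: gw.
Qed.

(** * Labels along the outer cycle *)

Local Notation cs := (@cosucc G).

Lemma rot_cs d : rt (cs d) = rv d. Proof. exact: permKV. Qed.
Lemma tl_cs d : tl (cs d) = hd d. Proof. by rewrite -tl_rot rot_cs. Qed.
Lemma cs_inj : injective cs.
Proof. by move=> x y /(congr1 rt); rewrite !rot_cs => /rv_inj. Qed.

Lemma angsum_rot c : angsum c (rt c) = ang c.
Proof. by rewrite /angsum findex0 big_ord1. Qed.

Lemma turn_fn x : turn x (fn x) = 2 - (ang (rv x))%:Z.
Proof. by rewrite /turn angsum_rot. Qed.

Lemma turn_cs d : turn d (cs d) = (ang (cs d))%:Z - 2.
Proof.
set z := cs d; set o := order z.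
have o2 := order_rot_ge2 z.
have order_rt : order (rt (rt z)) = o.
  by apply: order_fconnect perm_inj (fconnect_iter _ 2 z).
have rrz : iter (o - 2) rt (rt (rt z)) = z.
  by rewrite -!iterSr (_ : (o - 2).+2 = o) ?(iter_order perm_inj) //; lia.
have : sweep z (1 + (o - 2).+1) = 4%N.
  by rewrite (_ : (_ + _ = o)%N) ?sweep_order //; lia.
rewrite sweep_add sweep1 => sum4.
rewrite /turn angsumE -rot_cs -/z -[X in findex _ _ X]rrz findex_iter ?order_rt.
  by rewrite -[iter 1 rt z]/(rt z) in sum4; lia.
by lia.
Qed.

Lemma cs_fn y : cs (rv (fn y)) = rv y.
Proof. by rewrite /cosucc rvK permK. Qed.

Lemma fn_cs d : fn (rv (cs d)) = rv d.
Proof. by rewrite /facenext rvK rot_cs. Qed.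

Lemma iter_cs_fn k y : iter k cs (rv (iter k fn y)) = rv y.
Proof. by elim: k y => // k IH y; rewrite iterSr iterS cs_fn IH. Qed.

Lemma iter_fn_cs k d : iter k fn (rv (iter k cs d)) = rv d.
Proof. by elim: k d => // k IH d; rewrite iterSr iterS fn_cs IH. Qed.

Lemma onCo_face d : onCo d = is_face_of (fout G) (rv d).
Proof.
rewrite /onCo /is_face_of; apply/idP/idP => [Co_d | face_d].
  have := iter_fn_cs (findex cs (rv (fout G)) d) (rv (fout G)).
  rewrite iter_findex // rvK => <-.
  by rewrite (fconnect_sym fn_inj) fconnect_iter.
rewrite (fconnect_sym fn_inj) in face_d.
have := iter_cs_fn (findex fn (rv d) (fout G)) (rv d).
by rewrite iter_findex // rvK => <-; rewrite fconnect_iter.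
Qed.

(* Rotation of the walk along [C_o] through the [m + 1] darts starting at [d];
   for [m] below the length of [C_o] this is a label ([lab_iter]). *)
Definition corot d m : int := \sum_(i < m) turn (iter i cs d) (iter i.+1 cs d).

Lemma corot0 d : corot d 0 = 0. Proof. by rewrite /corot big_ord0. Qed.

Lemma corotS d m : corot d m.+1 = corot d m + turn (iter m cs d) (iter m.+1 cs d).
Proof. by rewrite /corot big_ord_recr. Qed.

Lemma corot_add d j k : corot d (j + k) = corot d j + corot (iter j cs d) k.
Proof.
rewrite /corot big_split_ord /=; congr (_ + _).
by apply: eq_bigr => i _; rewrite -!iterD addnC.
Qed.

Lemma corot_step d k : corot d k.+1 - corot d k = (ang (iter k.+1 cs d))%:Z - 2.
Proof. by rewrite corotS addrAC subrr add0r turn_cs. Qed.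

Lemma corot_step_range d k : -1 <= corot d k.+1 - corot d k <= 1.
Proof. by rewrite corot_step; have := angle_range (iter k.+1 cs d); lia. Qed.

Local Notation coorder d := (fingraph.order cs d).

(* The outer face has rotation 0 because it is not the central face; [C_o]
   runs around it backwards. *)
Lemma corot_order d : onCo d -> ~~ is_face_of (fout G) (fcen G) ->
  corot d (coorder d) = 0.
Proof.
move=> d_Co not_central.
have -> : corot d (coorder d) = \sum_(x | onCo x) ((ang x)%:Z - 2).
  rewrite /corot -(order_fconnect cs_inj (fconnect1 cs d)).
  under eq_bigr do rewrite turn_cs -iterS iterSr.
  rewrite (sum_orbit _ (fun x => (ang x)%:Z - 2)); apply: eq_bigl => x.
  by rewrite /onCo -(same_fconnect1 cs_inj) (same_connect (fconnect_sym cs_inj) d_Co).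
rewrite (reindex_inj rv_inj) /=.
under eq_bigl do rewrite onCo_face rvK.
under eq_bigr do rewrite -opprB -turn_fn.
rewrite sumrN -/(face_rotation _) face_rotationE [is_face_of (fout G) _]connect0.
rewrite /is_face_of (fconnect_sym fn_inj) -/(is_face_of _ _).
by rewrite (negbTE not_central) oppr0.
Qed.

Section OuterLabels.
Variable e0 : D.
Hypothesis e0_Co : onCo e0.
Hypothesis not_central : ~~ is_face_of (fout G) (fcen G).
Local Notation n := (coorder e0).

Lemma coorder_gt0 : (0 < n)%N. Proof. exact: fingraph.order_gt0. Qed.

Lemma iter_cs_mod k : iter k cs e0 = iter (k %% n) cs e0.
Proof.
rewrite {1}(divn_eq k n); elim: (k %/ n)%N => [|q IH]; first by rewrite mul0n.
by rewrite mulSn -addnA addnC iterD (iter_order cs_inj) IH.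
Qed.

Lemma corot_mod k : corot e0 k = corot e0 (k %% n).
Proof.
rewrite {1}(divn_eq k n); elim: (k %/ n)%N => [|q IH]; first by rewrite mul0n.
by rewrite mulSn -addnA corot_add corot_order // add0r (iter_order cs_inj) IH.
Qed.

Lemma onCo_iter k : onCo (iter k cs e0).
Proof. exact: connect_trans e0_Co (fconnect_iter _ _ _). Qed.

Lemma lab_iter r : (r < n)%N -> lab e0 (iter r cs e0) = corot e0 r.
Proof. by move=> rn; rewrite /lab findex_iter. Qed.

Lemma lab_to_base k : lab (iter k cs e0) e0 = - corot e0 k.
Proof.
rewrite iter_cs_mod corot_mod; have := ltn_pmod k coorder_gt0.
move: (k %% n)%N => r rn.
have [->|r_gt0] := posnP r; first by rewrite /lab findex0 big_ord0 corot0 oppr0.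
set c := iter r cs e0.
have c_n : fingraph.order cs c = n := order_fconnect cs_inj (fconnect_iter _ _ _).
have c_e0 : iter (n - r) cs c = e0.
  by rewrite /c -iterD subnK ?(iter_order cs_inj) // ltnW.
have : findex cs c e0 = (n - r)%N.
  by rewrite -[X in findex _ _ X]c_e0 findex_iter // c_n; lia.
have := corot_add e0 r (n - r); rewrite subnKC ?(ltnW rn) // corot_order // -/c.
rewrite /lab => sum0 ->; rewrite -/(corot c (n - r)).
by apply/eqP; rewrite -addr_eq0 addrC -sum0.
Qed.

Lemma corot_le_Imax k : corot e0 k <= Imax e0.
Proof.
rewrite corot_mod -lab_iter ?ltn_pmod ?coorder_gt0 //.
by apply: le_bigmax_seq => //; rewrite -fconnect_orbit fconnect_iter.
Qed.

Lemma Imin_le_corot k : Imin e0 <= corot e0 k.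
Proof.
rewrite corot_mod -lab_iter ?ltn_pmod ?coorder_gt0 //.
by apply: ge_bigmin_seq => //; rewrite -fconnect_orbit fconnect_iter.
Qed.

Lemma Imax_attained : exists2 k, (k < n)%N & corot e0 k = Imax e0.
Proof.
have [e] := bigmax_attained (lab e0) (fingraph.in_orbit cs e0).
by rewrite -fconnect_orbit => /findex_max; exists (findex cs e0 e).
Qed.

Lemma Imin_attained : exists2 k, (k < n)%N & corot e0 k = Imin e0.
Proof.
have [e] := bigmin_attained (lab e0) (fingraph.in_orbit cs e0).
by rewrite -fconnect_orbit => /findex_max; exists (findex cs e0 e).
Qed.

End OuterLabels.

(** * Horizontal segments *)

Section Potential.
Variable phi : D -> int.
Hypothesis phi_turn : forall a b, hd a = tl b -> (4 %| turn a b - (phi b - phi a))%Z.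
Hypothesis phi_rv : forall d, (4 %| phi (rv d) - phi d - 2)%Z.

Lemma phi_rot z : (4 %| phi (rt z) - phi z + (ang z)%:Z)%Z.
Proof.
have := phi_turn (a := rv z) (b := rt z); rewrite hd_rv tl_rot /turn rvK angsum_rot.
move=> /(_ erefl) turn_z; have := rpredB turn_z (phi_rv z).
have -> : 2 - (ang z)%:Z - (phi (rt z) - phi (rv z)) - (phi (rv z) - phi z - 2)
          = 4 - (phi (rt z) - phi z + (ang z)%:Z) by ring.
by rewrite rpredBl ?dvdzz.
Qed.

Lemma phi_iter_rot z k : (4 %| phi (iter k rt z) - phi z + (sweep z k)%:Z)%Z.
Proof.
elim: k => [|k IH]; first by rewrite /sweep big_ord0 subrr.
rewrite iterS -addn1 sweep_add sweep1 PoszD.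
have -> : phi (rt (iter k rt z)) - phi z + ((sweep z k)%:Z + (ang (iter k rt z))%:Z)
  = (phi (iter k rt z) - phi z + (sweep z k)%:Z)
    + (phi (rt (iter k rt z)) - phi (iter k rt z) + (ang (iter k rt z))%:Z) by ring.
exact: rpredD IH (phi_rot _).
Qed.

Lemma rotation_phi x s : path (fun a b => hd a == tl b) x s ->
  (4 %| rotation (x :: s) - (phi (last x s) - phi x))%Z.
Proof.
elim: s x => [|y s IH] x /=; first by rewrite subrr.
case/andP => /eqP xy /IH ys.
have -> : turn x y + rotation (y :: s) - (phi (last y s) - phi x) =
  (turn x y - (phi y - phi x)) + (rotation (y :: s) - (phi (last y s) - phi y)) by ring.
exact: rpredD (phi_turn xy) ys.
Qed.

Lemma walk_path a v P b : hd a = v -> walk_from v P -> tl b = walk_end v P ->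
  path (fun x y => hd x == tl y) a (P ++ [:: b]).
Proof.
elim: P a v => [|x P IH] a v /= av.
  by rewrite /walk_end /= av => _ ->; rewrite eqxx.
by case/andP => /eqP xv walk_P b_end; rewrite av xv eqxx /=; apply: IH.
Qed.

Lemma direction_phi e v P f :
  refpath e v P f -> (4 %| direction e v P f - (phi f - phi e))%Z.
Proof.
case=> [[walk_P _] [v_e [t_f _]]]; rewrite /direction.
set t := walk_end v P in t_f *.
set a := if v == hd e then e else rv e; set b := if t == tl f then f else rv f.
set ca := (if v == hd e then 0 else 2)%N%:Z.
set cb := (if t == tl f then 0 else 2)%N%:Z.
have ha : hd a = v.
  by rewrite /a; case: eqP => // /nesym; case: v_e => -> //; rewrite hd_rv.
have hb : tl b = t by rewrite /b; case: eqP => // /nesym; case: t_f => ->.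
have a_e : (4 %| phi a - phi e - ca)%Z.
  by rewrite /a /ca; case: eqP => _; rewrite ?subrr.
have b_f : (4 %| phi b - phi f - cb)%Z.
  by rewrite /b /cb; case: eqP => _; rewrite ?subrr.
have := rotation_phi (walk_path ha walk_P hb); rewrite last_cat /= => rot_ab.
have -> : rotation (a :: P ++ [:: b]) + ca - cb - (phi f - phi e) =
  (rotation (a :: P ++ [:: b]) - (phi b - phi a)) + (phi b - phi f - cb)
  - (phi a - phi e - ca) by ring.
by apply: rpredB => //; apply: rpredD.
Qed.

Lemma points_phi e f k : points e f k -> (4 %| phi f - phi e - k%:Z)%Z.
Proof.
case=> v [P [ref_P dir_k]]; have := direction_phi ref_P.
by rewrite -!eqz_mod_dvd => /eqP dir_phi; apply/eqP; rewrite -dir_phi -dir_k modz_mod.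
Qed.

Lemma points_self (e : D) : points e e 0.
Proof.
have ref : refpath e (hd e) [::] e by do !split => //; right.
exists (hd e), [::]; split => //.
by apply/dvdz_mod0P; have := direction_phi ref; rewrite subrr subr0.
Qed.

(* Headings 0, 1, 2, 3 mean east, south, west, north with respect to [estar]. *)
Definition heading (estar d : D) : int := ((phi d - phi estar) %% 4)%Z.

Lemma heading_points estar d k : (k < 4)%N -> points estar d k -> heading estar d = k.
Proof.
move=> k4 /points_phi; rewrite /heading -eqz_mod_dvd => /eqP ->.
by rewrite modz_nat modn_small.
Qed.

Lemma heading_dvd estar d z c : (4 %| phi d - phi z - c)%Z ->
  heading estar d = ((heading estar z + c) %% 4)%Z.
Proof.
rewrite /heading -eqz_mod_dvd => /eqP dz.
by rewrite modzDml -[RHS]modzDmr -dz modzDmr; congr (_ %% _)%Z; ring.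
Qed.

Lemma heading_rv estar d : heading estar (rv d) = ((heading estar d + 2) %% 4)%Z.
Proof. exact/heading_dvd/phi_rv. Qed.

Lemma heading_iter_rot estar z k :
  heading estar (iter k rt z) = ((heading estar z - (sweep z k)%:Z) %% 4)%Z.
Proof.
by apply: heading_dvd; rewrite opprK phi_iter_rot.
Qed.

Lemma heading_rot estar z :
  heading estar (rt z) = ((heading estar z - (ang z)%:Z) %% 4)%Z.
Proof. by rewrite -sweep1 -heading_iter_rot. Qed.

Lemma darts_around z d : tl d = tl z ->
  [\/ d = z, d = rt z | exists2 s, (ang z < s <= 3)%N &
      forall estar, heading estar d = ((heading estar z - s%:Z) %% 4)%Z].
Proof.
move=> dz; have zd : fconnect rt z d by rewrite fconnect_rot dz.
have := iter_findex zd; have := findex_max zd.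
case: (findex rt z d) => [|[|j]] j_lt <-.
- by constructor 1.
- by constructor 2.
constructor 3.
exists (sweep z j.+2); last by move=> estar; rewrite heading_iter_rot.
apply/andP; split.
  rewrite (sweep_add z 1 j.+1) sweep1 -addn1 leq_add2l.
  exact: leq_trans (sweep_ge _ _).
have := sweep_order z; rewrite -(subnKC (ltnW j_lt)) sweep_add.
by have := sweep_ge (iter j.+2 rt z) (order z - j.+2); lia.
Qed.

Definition closed_at (estar : D) (A : V -> Prop) (a : V) := forall d, tl d = a ->
  heading estar d != 3 /\ ((heading estar d == 0) || (heading estar d == 2) -> A (hd d)).

Lemma closed_at_east_right estar A z : ang z = 3%N -> heading estar z = 0 ->
  A (hd z) -> closed_at estar A (tl z).
Proof.
move=> a3 h0 Az d /darts_around [->|->|[s]]; last by rewrite a3; lia.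
  by rewrite h0.
by rewrite heading_rot a3 h0.
Qed.

Lemma closed_at_south_right estar A z : ang z = 3%N -> heading estar z = 1 ->
  A (hd (rt z)) -> closed_at estar A (tl z).
Proof.
move=> a3 h1 Az d /darts_around [->|->|[s]]; last by rewrite a3; lia.
  by rewrite h1.
by rewrite heading_rot a3 h1.
Qed.

Lemma closed_at_east_straight estar A z : ang z = 2%N -> heading estar z = 0 ->
  A (hd z) -> A (hd (rt z)) -> closed_at estar A (tl z).
Proof.
move=> a2 h0 Az Arz d /darts_around [->|->|[s]]; first by rewrite h0.
  by rewrite heading_rot a2 h0.
by rewrite a2 => /andP [s3 s_le3] ->; rewrite h0 (_ : s = 3%N) //; lia.
Qed.

(* [A] is closed under east and west edges, hence contains the horizontal
   segment of [estar]. *)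
Lemma no_north_edge estar (A : V -> Prop) : A (tl estar) ->
  (forall a, A a -> closed_at estar A a) ->
  forall n, points estar n 3 -> ~ seg_vertex estar (tl n).
Proof.
move=> A_estar A_closed n /(heading_points (isT : 3 < 4)%N) hn seg_n.
suff /A_closed /(_ n erefl) [] : A (tl n) by rewrite hn.
move/clos_rt_rtn1_iff: seg_n.
elim=> // y w [d [/(heading_points (isT : 0 < 4)%N) hd0 dyw]] _ Ay.
case: dyw => [[dy <-]|[dw dy]].
  by have [_] := A_closed _ Ay d dy; rewrite hd0; apply.
by have [_] := A_closed _ Ay (rv d) dy; rewrite hd_rv heading_rv hd0 dw; apply.
Qed.

Lemma phi_corot d k : (4 %| phi (iter k cs d) - phi d - corot d k)%Z.
Proof.
elim: k => [|k IH]; first by rewrite corot0 !subrr.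
have step := phi_turn (esym (tl_cs (iter k cs d))); rewrite corotS -iterS in step *.
have -> : phi (iter k.+1 cs d) - phi d
          - (corot d k + turn (iter k cs d) (iter k.+1 cs d))
  = (phi (iter k cs d) - phi d - corot d k)
    - (turn (iter k cs d) (iter k.+1 cs d) - (phi (iter k.+1 cs d) - phi (iter k cs d))).
  by ring.
exact: rpredB IH step.
Qed.

Lemma heading_iter_cs d i m :
  heading (iter i cs d) (iter m cs d) = ((corot d m - corot d i) %% 4)%Z.
Proof.
apply/eqP; rewrite eqz_mod_dvd.
have -> : phi (iter m cs d) - phi (iter i cs d) - (corot d m - corot d i) =
  (phi (iter m cs d) - phi d - corot d m) - (phi (iter i cs d) - phi d - corot d i).
  by ring.
exact: rpredB (phi_corot d m) (phi_corot d i).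
Qed.

Lemma hd_iter_cs d m : hd (iter m cs d) = tl (iter m.+1 cs d).
Proof. by rewrite iterS tl_cs. Qed.

Lemma hd_rot_iter_cs d m : hd (rt (iter m.+1 cs d)) = tl (iter m cs d).
Proof. by rewrite iterS rot_cs hd_rv. Qed.

Lemma angle_iter_cs d k :
  ang (iter k.+1 cs d) = 2 + (corot d k.+1 - corot d k) :> int.
Proof. by rewrite corot_step addrC subrK. Qed.

Lemma flat_no_north e0 : (forall k, corot e0 k = 0) ->
  forall n, points e0 n 3 -> ~ seg_vertex e0 (tl n).
Proof.
move=> corot_0; apply: (@no_north_edge e0 (fun a => exists m, tl (iter m cs e0) = a)).
  by exists 0%N.
move=> _ [m <-]; have [k ->] : exists k, iter m cs e0 = iter k.+1 cs e0.
  exists (m + (coorder e0).-1)%N; rewrite -addnS prednK ?fingraph.order_gt0 //.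
  by rewrite iterD (iter_order cs_inj).
apply: closed_at_east_straight.
- by apply/eqP; rewrite -eqz_nat angle_iter_cs !corot_0.
- by rewrite -[X in heading X _]/(iter 0 cs e0) heading_iter_cs !corot_0.
- by rewrite hd_iter_cs; exists k.+2.
- by rewrite hd_rot_iter_cs; exists k.
Qed.

Lemma run_no_north e0 i j : (i.+1 < j)%N ->
  corot e0 i = corot e0 i.+1 - 1 -> corot e0 j = corot e0 i.+1 + 1 ->
  (forall t, (i < t < j)%N -> corot e0 t = corot e0 i.+1) ->
  forall n, points (iter i.+1 cs e0) n 3 -> ~ seg_vertex (iter i.+1 cs e0) (tl n).
Proof.
move=> ij c_i c_j c_run.
pose A a := exists2 m, (i < m <= j)%N & tl (iter m cs e0) = a.
have A_iter m : (i < m <= j)%N -> A (tl (iter m cs e0)) by exists m.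
apply: (@no_north_edge _ A); first by apply: A_iter; lia.
move=> _ [[//|k] /andP [ik kj] <-].
have heading_k : heading (iter i.+1 cs e0) (iter k.+1 cs e0) =
                 ((corot e0 k.+1 - corot e0 i.+1) %% 4)%Z by exact: heading_iter_cs.
have [ki|ik'] := eqVneq k i.
  rewrite ki in heading_k *; apply: closed_at_east_right.
  - by apply/eqP; rewrite -eqz_nat angle_iter_cs c_i; lia.
  - by rewrite heading_k subrr.
  - by rewrite hd_iter_cs; apply: A_iter; lia.
have c_k : corot e0 k = corot e0 i.+1 by apply: c_run; lia.
have [kj'|kj'] := eqVneq k.+1 j.
  rewrite kj' in heading_k *; apply: closed_at_south_right.
  - by apply/eqP; rewrite -eqz_nat -kj' angle_iter_cs kj' c_j c_k; lia.
  - by rewrite heading_k c_j addrAC subrr add0r.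
  - by rewrite -kj' hd_rot_iter_cs; apply: A_iter; lia.
have c_k1 : corot e0 k.+1 = corot e0 i.+1 by apply: c_run; lia.
apply: closed_at_east_straight.
- by apply/eqP; rewrite -eqz_nat angle_iter_cs c_k c_k1; lia.
- by rewrite heading_k c_k1 subrr.
- by rewrite hd_iter_cs; apply: A_iter; lia.
- by rewrite hd_rot_iter_cs; apply: A_iter; lia.
Qed.

Theorem reference_edge_exists e0 : onCo e0 -> ~~ is_face_of (fout G) (fcen G) ->
  forall x, LCo e0 <= x <= UCo e0 ->
  exists estar, [/\ onCo estar, lab estar e0 = x, points estar estar 0 &
    forall n, points estar n 3 -> ~ seg_vertex estar (tl n)].
Proof.
move=> e0_Co not_central x; rewrite /LCo /UCo.
have c_ge := Imin_le_corot e0_Co not_central.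
have c_le := corot_le_Imax e0_Co not_central.
have := c_ge 0%N; have := c_le 0%N; rewrite corot0 => Imax_ge0 Imin_le0.
have [c_min | _] := eqVneq (Imax e0) (Imin e0).
  have c_0 k : corot e0 k = 0 by have := c_le k; have := c_ge k; lia.
  move=> /= /andP [x_ge x_le]; exists e0; split => //.
  - by rewrite /lab findex0 big_ord0; lia.
  - exact: points_self.
  - exact: flat_no_north.
move=> /= /andP [x_ge x_le].
have [kM _ c_kM] := Imax_attained e0; have [km km_lt c_km] := Imin_attained e0.
have c_kMn : corot e0 (kM + coorder e0) = Imax e0.
  by rewrite (corot_mod e0_Co not_central) modnDr -corot_mod.
have [i [j [ij c_i c_j c_run]]] := @unit_steps_crossing (corot e0) km
  (kM + coorder e0) (- x) (ltn_addl _ km_lt) (corot_step_range e0)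
  ltac:(rewrite c_km; lia) ltac:(rewrite c_kMn; lia).
have c_i1 : corot e0 i.+1 = - x by apply: c_run; lia.
exists (iter i.+1 cs e0); split.
- exact: onCo_iter.
- by rewrite lab_to_base // c_i1 opprK.
- exact: points_self.
- by apply: (@run_no_north _ _ j); rewrite ?c_i1.
Qed.

End Potential.
End OrthoRadial.

Theorem lemma21 (G : orgraph) (e' : dart G) :
  valid_orgraph G ->
  ~~ is_face_of (fout G) (fcen G) ->
  onCo e' ->
  forall x : int, (LCo e' <= x <= UCo e')%R ->
  exists estar : dart G,
    onCo estar /\ lab estar e' = x /\
    points estar estar 0 /\
    (forall n : dart G, points estar n 3 -> ~ seg_vertex estar (tail n)).
Proof.
move=> HG not_central e'_Co x x_range.
have [phi [phi_turn phi_rv]] := direction_potential_exists HG.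
have [estar [? ? ? ?]] :=
  reference_edge_exists HG phi_turn phi_rv e'_Co not_central x_range.
by exists estar.
Qed.
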